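(* If $g\in G(V)$ satisfies $(\flat f_{0,V})(\iota(g,\mathrm{id}_V))\neq0$, then $g\in P$.
   Context: Let $\mathbb F$ be a finite field of odd cardinality $q$, $\mathbb E/\mathbb F$ of degree $1$ or $2$ with Galois generator $x\mapsto\bar x$; $\mathcal C$ algebraically closed of characteristic not dividing $q$. $(V,\langle\cdot,\cdot\rangle_V)$ is an $\epsilon$-sesquilinear space over $\mathbb E$ (nondegenerate or zero form; $\epsilon_V=1$ if $\mathbb E\ne\mathbb F$), $G(V)$ its isometry group. $V^\square=V^+\oplus V^-$ with $\langle v_1^++w_1^-,v_2^++w_2^-\rangle=\langle v_1,v_2\rangle-\langle w_1,w_2\rangle$; $V^\Delta=\{v^++v^-\}$; $\iota(g_1,g_2)(v^++w^-)=(g_1v)^++(g_2w)^-$; $P_V$ the stabilizer of $V^\Delta$. For $\chi:\mathbb E^\times\to\mathcal C^\times$, $\chi^{-c}(x)=\chi(\bar x)^{-1}$; $I_V(\chi)$ is the space of $f$ on $G(V^\square)$ with $f(pg)=\chi(\det(p|_{V^\Delta}))f(g)$ ($p\in P_V$, nondegenerate case), resp. $f(pg)=\chi(\det(p|_{V^\Delta}))\chi^{-c}(\det(p|_{V^\square/V^\Delta}))f(g)$ (zero-form case); $f_{0,V}$ is the element of $I_V(\chi)$ supported on $P_V$ with $f_{0,V}(\mathrm{id})=1$; $I_X(\chi),I_{V_0}(\chi)$ are defined likewise. Parabolic setup: nondegenerate case $V=X\oplus V_0\oplus Y$ ($X,Y$ totally isotropic in duality, $V_0=(X\oplus Y)^\perp$),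 $P\subset G(V)$ the stabilizer of $0\subset X\subset X\oplus V_0\subset V$ with unipotent radical $N$, $P^\square_X\subset G(V^\square)$ the stabilizer of $0\subset X^\square\subset X^\square\oplus V_0^\square\subset V^\square$ with Levi $L^\square_X$ (stabilizer of $X^\square,V_0^\square,Y^\square$); zero-form case $V=X\oplus V_0$, $P$ the stabilizer of $X$, $P^\square_X$ the stabilizer of $X^\square$ with Levi the stabilizer of $X^\square$ and $V_0^\square$. $\flat f$ is defined by $(\flat f)(g)(l)=\sum_{(u_1,u_2)\in N^\Delta\backslash(N\times N)}f(\iota(u_1,u_2)lg)$ for $g\in G(V^\square)$, $l\in L^\square_X$, with $N^\Delta=\{(u,u)\}$; ''$(\flat f)(g)\neq0$'' means this function of $l$ is not identically zero. *)

From HB Require Import structures.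
From mathcomp Require Import all_boot all_order all_algebra.
Set Implicit Arguments. Unset Strict Implicit. Unset Printing Implicit Defensive.
Import Order.TTheory GRing.Theory Num.Theory.
Local Open Scope ring_scope.

(* E is a finite field with an involutive field automorphism
   conj (x |-> \bar x); F is its fixed field (so [E:F] is 1 or 2).
   V = column vectors 'cV[E]_n, a linear map g acts by v |-> g *m v (left
   action, composition = matrix product). *)

Section Defs.
Variable E : finFieldType.
Variable conj : {rmorphism E -> E}.

Definition Fset : {set E} := [set x | conj x == x].

Definition form n (M : 'M[E]_n) (v w : 'cV[E]_n) : E :=
  (v^T *m M *m map_mx conj w) 0 0.

Definition isom n (M : 'M[E]_n) (g : 'M[E]_n) : bool :=
  (g \in unitmx) && (g^T *m M *m map_mx conj g == M).

Definition sesq_space n (eps : E) (M : 'M[E]_n) (zf : bool) : Prop :=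
  [/\ eps = 1 \/ eps = -1,
      (exists x, conj x != x) -> eps = 1,
      M = eps *: (map_mx conj M)^T
    & if zf then M = 0 else M \in unitmx].

Definition imset_mx m (g : 'M[E]_m) (S : {set 'cV[E]_m}) : {set 'cV[E]_m} :=
  [set g *m v | v in S].

Definition stab m (g : 'M[E]_m) (S : {set 'cV[E]_m}) : bool := imset_mx g S == S.

Section Sets.
Variable n : nat.
Implicit Types S T X Vz Y : {set 'cV[E]_n}.

Definition subspace S : bool :=
  [&& 0 \in S, [forall v in S, forall w in S, v + w \in S]
    & [forall a : E, forall v in S, a *: v \in S]].

Definition sumset S T : {set 'cV[E]_n} := [set v + w | v in S, w in T].


Definition orth (M : 'M[E]_n) S : {set 'cV[E]_n} :=
  [set v | [forall w in S, form M v w == 0]].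

Definition tot_isotropic (M : 'M[E]_n) S : bool :=
  [forall x in S, forall y in S, form M x y == 0].

Definition in_duality (M : 'M[E]_n) X Y : bool :=
  [forall x in X, [forall y in Y, form M x y == 0] ==> (x == 0)] &&
  [forall y in Y, [forall x in X, form M x y == 0] ==> (y == 0)].

(* Parabolic data.  Nondegenerate case: V = X (+) V0 (+) Y, X, Y totally
   isotropic in duality, V0 = (X (+) Y)^perp.  Zero-form case: V = X (+) V0. *)
Definition parab_data (zf : bool) (M : 'M[E]_n) X V0 Y : Prop :=
  if zf then
    [/\ subspace X, subspace V0, sumset X V0 = setT
      & [forall x in X, forall v in V0, (x + v == 0) ==> (x == 0) && (v == 0)]]
  else
    [/\ [&& subspace X, subspace Y, tot_isotropic M X, tot_isotropic M Y
           & in_duality M X Y], V0 = orth M (sumset X Y),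
        sumset (sumset X V0) Y = setT
      & [forall x in X, forall v in V0, forall y in Y,
           (x + v + y == 0) ==> [&& x == 0, v == 0 & y == 0]]].

(* P : stabilizer in G(V) of the flag 0 < X < X (+) V0 < V (resp. of X) *)
Definition inP (zf : bool) (M : 'M[E]_n) X V0 (g : 'M[E]_n) : bool :=
  isom M g && (if zf then stab g X else stab g X && stab g (sumset X V0)).

(* N : unipotent radical of P = elements of P acting trivially on the
   graded pieces of the flag *)
Definition inN (zf : bool) (M : 'M[E]_n) X V0 (g : 'M[E]_n) : bool :=
  [&& inP zf M X V0 g, [forall x in X, g *m x == x] &
    if zf then [forall v, g *m v - v \in X]
    else [forall v in sumset X V0, g *m v - v \in X] &&
         [forall v, g *m v - v \in sumset X V0]].

Definition Nset zf M X V0 : {set 'M[E]_n} := [set g | inN zf M X V0 g].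

(* doubled space V^box = V^+ (+) V^- realised as 'cV_(n+n) = col_mx v^+ w^- *)
Definition dbl_mx (M : 'M[E]_n) : 'M[E]_(n + n) := block_mx M 0 0 (- M).

Definition iota_sq (g1 g2 : 'M[E]_n) : 'M[E]_(n + n) := block_mx g1 0 0 g2.

Definition dblset S : {set 'cV[E]_(n + n)} := [set col_mx v w | v in S, w in S].

Definition diag_sp : {set 'cV[E]_(n + n)} := [set col_mx v v | v : 'cV[E]_n].

Definition inPV (M : 'M[E]_n) (p : 'M[E]_(n + n)) : bool :=
  isom (dbl_mx M) p && (imset_mx p diag_sp == diag_sp).

(* matrix of p|_{V^Delta} in the basis (e_i^+ + e_i^-) *)
Definition diag_part (p : 'M[E]_(n + n)) : 'M[E]_n := ulsubmx p + ursubmx p.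
(* matrix of the map induced by p on V^box / V^Delta in the basis of the
   classes of e_i^+ *)
Definition quot_part (p : 'M[E]_(n + n)) : 'M[E]_n := ulsubmx p - dlsubmx p.

Definition inL (zf : bool) (M : 'M[E]_n) X V0 Y (l : 'M[E]_(n + n)) : bool :=
  [&& isom (dbl_mx M) l, stab l (dblset X), stab l (dblset V0)
    & zf || stab l (dblset Y)].

(* right cosets N^Delta \ (N x N) *)
Definition NDcosets (NS : {set 'M[E]_n}) : {set {set 'M[E]_n * 'M[E]_n}} :=
  [set [set (u *m pr.1, u *m pr.2) | u in NS] | pr in setX NS NS].

(* (flat f)(h)(l) = sum over (u1,u2) in N^Delta\(N x N) of f(iota_sq(u1,u2) l h),
   each coset being represented by an (arbitrary) chosen element *)
Definition flat (C : ringType) (f : 'M[E]_(n + n) -> C) (NS : {set 'M[E]_n})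
    (h l : 'M[E]_(n + n)) : C :=
  \sum_(Cs in NDcosets NS)
     let pr := odflt (1%:M, 1%:M) [pick x in Cs] in f (iota_sq pr.1 pr.2 *m l *m h).

End Sets.

Definition chi_mc (C : fieldType) (chi : E -> C) (x : E) : C := (chi (conj x))^-1.

(* the character of P_V defining I_V(chi) *)
Definition modchar (C : fieldType) (chi : E -> C) (zf : bool) n
    (p : 'M[E]_(n + n)) : C :=
  chi (\det (diag_part p)) *
  (if zf then chi_mc chi (\det (quot_part p)) else 1).

End Defs.

From HB Require Import structures.
From mathcomp Require Import all_boot all_order all_algebra.
Set Implicit Arguments.
Unset Strict Implicit.
Unset Printing Implicit Defensive.

Import Order.TTheory GRing.Theory Num.Theory.
Local Open Scope ring_scope.

(* Some term f(iota(u1,u2) l iota(g,1)) of the sum defining flat f is nonzero;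
   the coset representatives (u1,u2) lie in P x P, so q := iota(u1,u2) l
   stabilizes W^box for W = X and W = X + V0, and since f is supported on P_V,
   q iota(g,1) fixes the diagonal V^Delta.  Then q maps iota(g,1)V^Delta :&: W^box = {(gv,v) | v, gv in W}
   bijectively onto V^Delta :&: W^box = {(v,v) | v in W}; comparing
   cardinalities gives gW = W. *)

Section Isometries.
Variables (E : finFieldType) (conj : {rmorphism E -> E}).

Lemma isom_mul m (M a b : 'M[E]_m) :
  isom conj M a -> isom conj M b -> isom conj M (a *m b).
Proof.
case/andP=> ua /eqP ha; case/andP=> ub /eqP hb.
apply/andP; split; first by rewrite unitmx_mul ua ub.
by rewrite trmx_mul map_mxM -!mulmxA (mulmxA a^T) (mulmxA (a^T *m M)) ha mulmxA hb.
Qed.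

Lemma isom1 m (M : 'M[E]_m) : isom conj M 1%:M.
Proof. by apply/andP; split; rewrite ?unitmx1 // map_mx1 trmx1 mul1mx mulmx1. Qed.

Lemma isom_unit m (M g : 'M[E]_m) : isom conj M g -> g \in unitmx.
Proof. by case/andP. Qed.

Lemma iota_sq_unit n (a b : 'M[E]_n) :
  a \in unitmx -> b \in unitmx -> iota_sq a b \in unitmx.
Proof. by move=> ua ub; rewrite unitmxE det_ublock unitrM -!unitmxE ua ub. Qed.

Lemma iota_sq_col n (a b : 'M[E]_n) (v w : 'cV[E]_n) :
  iota_sq a b *m col_mx v w = col_mx (a *m v) (b *m w).
Proof. by rewrite /iota_sq mul_block_col !mul0mx addr0 add0r. Qed.

Lemma isom_iota_sq n (M a b : 'M[E]_n) : isom conj M a -> isom conj M b ->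
  isom conj (dbl_mx M) (iota_sq a b).
Proof.
move=> ia ib; have [ua ub] := (isom_unit ia, isom_unit ib).
apply/andP; split; first exact: iota_sq_unit.
case/andP: ia => _ /eqP ha; case/andP: ib => _ /eqP hb.
rewrite /iota_sq /dbl_mx tr_block_mx map_block_mx !trmx0 !map_mx0 !mulmx_block.
by rewrite !(mulmx0, mul0mx, addr0, add0r) mulmxN mulNmx ha hb.
Qed.

End Isometries.

Section Stabilizers.
Variable E : finFieldType.

Lemma mulmx_inj m (q : 'M[E]_m) :
  q \in unitmx -> injective (fun v : 'cV[E]_m => q *m v).
Proof. by move=> uq v w /(congr1 (mulmx (invmx q))); rewrite !mulKmx. Qed.

Lemma card_imset_mx m (q : 'M[E]_m) S : q \in unitmx -> #|imset_mx q S| = #|S|.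
Proof. by move=> uq; rewrite card_imset //; apply: mulmx_inj. Qed.

Lemma imset_mxM m (a b : 'M[E]_m) S :
  imset_mx (a *m b) S = imset_mx a (imset_mx b S).
Proof. by rewrite /imset_mx -imset_comp; apply: eq_imset => v /=; rewrite mulmxA. Qed.

Lemma stab_mul m (a b : 'M[E]_m) S : stab a S -> stab b S -> stab (a *m b) S.
Proof. by rewrite /stab imset_mxM => /eqP ha /eqP ->; rewrite ha. Qed.

Lemma stab1 m (S : {set 'cV[E]_m}) : stab 1%:M S.
Proof.
apply/eqP/setP => v; apply/imsetP/idP => [[w wS ->] | vS]; rewrite ?mul1mx //.
by exists v; rewrite ?mul1mx.
Qed.

Lemma stab_subset m (q : 'M[E]_m) S :
  q \in unitmx -> imset_mx q S \subset S -> stab q S.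
Proof. by move=> uq sub; rewrite /stab eqEcard sub (card_imset_mx S uq) leqnn. Qed.

Lemma in_dblset n (S : {set 'cV[E]_n}) v w :
  (col_mx v w \in dblset S) = (v \in S) && (w \in S).
Proof.
apply/imset2P/andP => [[x y xS yS /eq_col_mx [-> ->]] // | [vS wS]].
by exists v w.
Qed.

Lemma stab_iota_sq n (a b : 'M[E]_n) S : a \in unitmx -> b \in unitmx ->
  stab a S -> stab b S -> stab (iota_sq a b) (dblset S).
Proof.
move=> ua ub /eqP ha /eqP hb; apply: stab_subset; first exact: iota_sq_unit.
apply/subsetP => _ /imsetP [_ /imset2P [v w vS wS ->] ->].
rewrite iota_sq_col in_dblset; apply/andP; split.
  by rewrite -ha imset_f.
by rewrite -hb imset_f.
Qed.

Lemma stab_dblset_sumset n (l : 'M[E]_(n + n)) A B : l \in unitmx ->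
  stab l (dblset A) -> stab l (dblset B) -> stab l (dblset (sumset A B)).
Proof.
move=> ul /eqP hA /eqP hB; apply: stab_subset => //.
apply/subsetP => _ /imsetP [_ /imset2P [_ _
  /imset2P [a b aA bB ->] /imset2P [a' b' aA' bB' ->] ->] ->].
rewrite -add_col_mx mulmxDr.
have /imset2P [c c' cA cA' ->] : l *m col_mx a a' \in dblset A.
  by rewrite -hA imset_f // in_dblset aA aA'.
have /imset2P [d d' dB dB' ->] : l *m col_mx b b' \in dblset B.
  by rewrite -hB imset_f // in_dblset bB bB'.
by rewrite add_col_mx in_dblset !(imset2_f (fun x y => x + y)).
Qed.

Lemma diag_sp_dblset n (W : {set 'cV[E]_n}) :
  diag_sp E n :&: dblset W = [set col_mx v v | v in W].
Proof.
apply/setP => z; apply/setIP/imsetP => [[/imsetP [v _ ->]] | [v vW ->]].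
  by rewrite in_dblset => /andP [vW _]; exists v.
by split; [apply/imsetP; exists v | rewrite in_dblset vW].
Qed.

Lemma iota_diag_sp_dblset n (g : 'M[E]_n) (W : {set 'cV[E]_n}) :
  imset_mx (iota_sq g 1%:M) (diag_sp E n) :&: dblset W =
  [set col_mx (g *m v) v | v in [set v in W | g *m v \in W]].
Proof.
apply/setP => z; apply/setIP/imsetP => [[/imsetP [_ /imsetP [v _ ->] ->]] | ].
  rewrite iota_sq_col mul1mx in_dblset => /andP [gvW vW].
  by exists v; rewrite // inE vW gvW.
case=> v; rewrite inE => /andP [vW gvW] ->; split; last by rewrite in_dblset gvW vW.
apply/imsetP; exists (col_mx v v); first by apply/imsetP; exists v.
by rewrite iota_sq_col mul1mx.
Qed.

Lemma stab_of_stab_diag n (g : 'M[E]_n) (q : 'M[E]_(n + n)) W :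
  g \in unitmx -> q \in unitmx -> stab q (dblset W) ->
  stab (q *m iota_sq g 1%:M) (diag_sp E n) -> stab g W.
Proof.
move=> ug uq /eqP hq; rewrite /stab imset_mxM => /eqP hD.
set T := [set v in W | g *m v \in W].
have graph_inj : injective (fun v : 'cV[E]_n => col_mx (g *m v) v).
  by move=> v w /eq_col_mx [].
have diag_inj : injective (fun v : 'cV[E]_n => col_mx v v).
  by move=> v w /eq_col_mx [].
have cardT : #|T| = #|W|.
  have := card_imset_mx (imset_mx (iota_sq g 1%:M) (diag_sp E n) :&: dblset W) uq.
  rewrite /imset_mx imsetI; last by move=> x y _ _; apply: mulmx_inj.
  rewrite -/(imset_mx q _) -/(imset_mx q _) hD hq iota_diag_sp_dblset.
  rewrite diag_sp_dblset card_imset; last exact: diag_inj.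
  by rewrite card_imset; last exact: graph_inj.
have TW : T = W.
  apply/eqP; rewrite eqEcard cardT leqnn andbT.
  by apply/subsetP => v; rewrite inE => /andP [].
apply: stab_subset => //; apply/subsetP => _ /imsetP [v vW ->].
by move: vW; rewrite -{1}TW inE => /andP [].
Qed.

End Stabilizers.

Lemma flat_neq0_term (E : finFieldType) (C : nzRingType) n
    (f : 'M[E]_(n + n) -> C) (NS : {set 'M[E]_n}) (h l : 'M[E]_(n + n))
    (Q : pred 'M[E]_n) :
  {in NS &, forall a b, Q (a *m b)} -> Q 1%:M -> flat f NS h l != 0 ->
  exists a b, [/\ Q a, Q b & f (iota_sq a b *m l *m h) != 0].
Proof.
move=> QNN Q1 flatN0.
have /forall_inPn [_ /imsetP [[u1 u2] /setXP [/= N1 N2] ->]] :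
    ~~ [forall Cs in NDcosets NS, (let pr := odflt (1%:M, 1%:M) [pick x in Cs] in
         f (iota_sq pr.1 pr.2 *m l *m h)) == 0].
  by apply: contra flatN0 => /forall_inP term0; apply/eqP/big1 => Cs /term0 /eqP.
case: pickP => [[a b] /imsetP [u uN [-> ->]] | _] /= fN0; last by exists 1%:M, 1%:M.
by exists (u *m u1), (u *m u2); split; rewrite ?QNN.
Qed.

Section Parabolic.
Variables (E : finFieldType) (conj : {rmorphism E -> E}).
Variables (n : nat) (zf : bool) (M : 'M[E]_n) (X V0 Y : {set 'cV[E]_n}).

Lemma inP_mul (a b : 'M[E]_n) :
  inP conj zf M X V0 a -> inP conj zf M X V0 b -> inP conj zf M X V0 (a *m b).
Proof.
case/andP=> ia sa /andP [ib sb]; rewrite /inP isom_mul //=.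
by case: zf sa sb => [|/andP [? ?] /andP [? ?]]; [exact: stab_mul | rewrite !stab_mul].
Qed.

Lemma inP1 : inP conj zf M X V0 1%:M.
Proof. by rewrite /inP isom1 !stab1; case: zf. Qed.

Lemma inP_Nset (u : 'M[E]_n) : u \in Nset conj zf M X V0 -> inP conj zf M X V0 u.
Proof. by rewrite inE => /andP []. Qed.

Lemma Levi_translate_stab (a b : 'M[E]_n) (l : 'M[E]_(n + n)) :
    inP conj zf M X V0 a -> inP conj zf M X V0 b -> inL conj zf M X V0 Y l ->
  [&& isom conj (dbl_mx M) (iota_sq a b *m l), stab (iota_sq a b *m l) (dblset X)
    & zf || stab (iota_sq a b *m l) (dblset (sumset X V0))].
Proof.
case/andP=> ia sa /andP [ib sb] /and4P [il lX lV0 _].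
have [ua ub] := (isom_unit ia, isom_unit ib).
have [aX bX] : stab a X /\ stab b X.
  by case: zf sa sb => [|/andP [? _] /andP [? _]]; split.
rewrite isom_mul ?isom_iota_sq // stab_mul ?stab_iota_sq //=.
case: zf sa sb => //= /andP [_ saW] /andP [_ sbW].
by rewrite stab_mul ?stab_iota_sq ?stab_dblset_sumset // (isom_unit il).
Qed.

Lemma inP_of_stab_diag (g : 'M[E]_n) (q : 'M[E]_(n + n)) :
    isom conj M g -> isom conj (dbl_mx M) q -> stab q (dblset X) ->
    zf || stab q (dblset (sumset X V0)) ->
  stab (q *m iota_sq g 1%:M) (diag_sp E n) -> inP conj zf M X V0 g.
Proof.
move=> ig iq qX qW qgD; have [ug uq] := (isom_unit ig, isom_unit iq).
rewrite /inP ig (stab_of_stab_diag ug uq qX qgD) /=.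
by case: zf qW => //= qW; apply: stab_of_stab_diag qgD.
Qed.

End Parabolic.

Theorem mainTheorem10 (E : finFieldType) (conj : {rmorphism E -> E})
    (C : closedFieldType) (chi : E -> C) (n : nat) (M : 'M[E]_n) (eps : E)
    (zf : bool) (X V0 Y : {set 'cV[E]_n}) (f : 'M[E]_(n + n) -> C) :
  involutive conj ->
  odd #|Fset conj| ->
  (forall p : nat, p \in [pchar C] -> ~~ (p %| #|Fset conj|)%N) ->
  (forall x y : E, x != 0 -> y != 0 -> chi (x * y) = chi x * chi y) ->
  (forall x : E, x != 0 -> chi x != 0) ->
  sesq_space conj eps M zf ->
  parab_data conj zf M X V0 Y ->
  (forall p g : 'M[E]_(n + n), inPV conj M p -> isom conj (dbl_mx M) g ->
     f (p *m g) = modchar conj chi zf p * f g) ->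
  (forall g : 'M[E]_(n + n), isom conj (dbl_mx M) g -> f g != 0 -> inPV conj M g) ->
  f 1%:M = 1 ->
  forall g : 'M[E]_n, isom conj M g ->
  (exists l : 'M[E]_(n + n), inL conj zf M X V0 Y l &&
      (flat f (Nset conj zf M X V0) (iota_sq g 1%:M) l != 0)) ->
  inP conj zf M X V0 g.
Proof.
move=> _ _ _ _ _ _ _ _ f_supp _ g ig [l /andP [Ll flatN0]].
have PNN : {in Nset conj zf M X V0 &, forall u v, inP conj zf M X V0 (u *m v)}.
  by move=> u v Nu Nv; rewrite inP_mul ?inP_Nset.
have [a [b [Pa Pb fN0]]] := flat_neq0_term PNN (inP1 _ _ _ _ _) flatN0.
have /and3P [iq qX qW] := Levi_translate_stab Pa Pb Ll.
have /andP [_ qgD] := f_supp _ (isom_mul iq (isom_iota_sq ig (isom1 _ _))) fN0.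
exact: inP_of_stab_diag ig iq qX qW qgD.
Qed.
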